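(* Let $\alpha$ be an ordinal number such that either $\Pi(\Pi_\alpha\mathcal A)=\Pi_\alpha\mathcal A=\Sigma(\Pi_\alpha\mathcal A)$, or $\Pi(\Sigma_\alpha\mathcal A)=\Sigma_\alpha\mathcal A=\Sigma(\Sigma_\alpha\mathcal A)$. Then $\alpha$ is uncountable.
   Context: $\mathbb N=\{1,2,\dots\}$, and $\mathbb N^{\mathbb N}$ is the Baire space. For $m,n\in\mathbb N$ let $B^m_n=\{f\in\mathbb N^{\mathbb N}: f(n)=m\}$. $\mathcal A$ is the family of all sets $T_1\cup\dots\cup T_L$ ($L\in\mathbb N$), each $T_\ell$ a finite intersection $S_1\cap\dots\cap S_K$ ($K\in\mathbb N$) of sets of the form $B^m_n$ or $\mathbb N^{\mathbb N}\setminus B^m_n$. For a family $\mathcal X$ of subsets of $\mathbb N^{\mathbb N}$, $\Pi(\mathcal X)$ is the family of all countable intersections $\bigcap_n X_n$ and $\Sigma(\mathcal X)$ that of all countable unions $\bigcup_n X_n$ with $X_n\in\mathcal X$. Define by transfinite recursion $\Pi_0\mathcal A=\Sigma_0\mathcal A=\mathcal A$, $\Pi_{\beta+1}\mathcal A=\Pi(\Sigma_\beta\mathcal A)$, $\Sigma_{\beta+1}\mathcal A=\Sigma(\Pi_\beta\mathcal A)$, and for limit $\lambda$, $\Pi_\lambda\mathcal A=\bigcup_{\beta<\lambda}\Pi_\beta\mathcal A$, $\Sigma_\lambda\mathcal A=\bigcup_{\beta<\lambda}\Sigma_\beta\mathcal A$. (In the paper's terminology, the two hypotheses say that the hierarchy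 of extensions of the zero valuation on $\mathcal A$ has collapsed at $\Pi_\alpha\mathcal A$, resp. at $\Sigma_\alpha\mathcal A$.) *)

From Stdlib Require Import List.
Import ListNotations.

(* Baire space: N^N.  We index from 0 (nat -> nat); the paper's N = {1,2,...}
   is order-isomorphic to nat via k |-> k-1, so B^m_n corresponds to
   bset (m-1) (n-1). *)
Definition baire := nat -> nat.
Definition bset := baire -> Prop.
Definition family := bset -> Prop.

Definition B (m n : nat) : bset := fun f => f n = m.

(* a literal: (true, m, n) stands for B^m_n, (false, m, n) for its complement *)
Definition lit_sem (l : bool * nat * nat) : bset :=
  match l with
  | (true, m, n) => B m n
  | (false, m, n) => fun f => ~ B m n f
  end.

Definition inA (X : bset) : Prop :=
  exists ts : list (list (bool * nat * nat)),
    ts <> [] /\ (forall t, In t ts -> t <> []) /\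
    forall f, X f <-> exists t, In t ts /\ forall l, In l t -> lit_sem l f.

Definition PiOf (F : family) : family :=
  fun X => exists Xs : nat -> bset, (forall k, F (Xs k)) /\
    forall f, X f <-> forall k, Xs k f.
Definition SigmaOf (F : family) : family :=
  fun X => exists Xs : nat -> bset, (forall k, F (Xs k)) /\
    forall f, X f <-> exists k, Xs k f.

Definition fam_eq (F G : family) : Prop := forall X, F X <-> G X.

(* Ordinals are represented as elements of a well-ordered type (W, lt):
   the ordinal denoted by w is the order type of { v | lt v w }. *)
Section Hierarchy.
Variables (W : Type) (lt : W -> W -> Prop).

Definition is_zero (w : W) : Prop := forall v, ~ lt v w.
Definition is_pred (v w : W) : Prop := lt v w /\ forall u, lt v u -> ~ lt u w.
Definition is_limit (w : W) : Prop := ~ is_zero w /\ forall v, ~ is_pred v w.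

(* Transfinite recursion defining Pi_w A and Sigma_w A:
   Pi_0 = Sigma_0 = A, Pi_{b+1} = Pi(Sigma_b), Sigma_{b+1} = Sigma(Pi_b),
   Pi_l = U_{b<l} Pi_b, Sigma_l = U_{b<l} Sigma_b for limit l. *)
Inductive InPi : W -> bset -> Prop :=
| InPi_zero w X : is_zero w -> inA X -> InPi w X
| InPi_succ w v X : is_pred v w ->
    (exists Xs : nat -> bset, (forall k, InSigma v (Xs k)) /\
       forall f, X f <-> forall k, Xs k f) -> InPi w X
| InPi_lim w v X : is_limit w -> lt v w -> InPi v X -> InPi w X
with InSigma : W -> bset -> Prop :=
| InSigma_zero w X : is_zero w -> inA X -> InSigma w X
| InSigma_succ w v X : is_pred v w ->
    (exists Xs : nat -> bset, (forall k, InPi v (Xs k)) /\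
       forall f, X f <-> exists k, Xs k f) -> InSigma w X
| InSigma_lim w v X : is_limit w -> lt v w -> InSigma v X -> InSigma w X.

End Hierarchy.

Definition well_order (W : Type) (lt : W -> W -> Prop) : Prop :=
  well_founded lt /\
  (forall x y z, lt x y -> lt y z -> lt x z) /\
  (forall x y, lt x y \/ x = y \/ lt y x).

Definition uncountable_below (W : Type) (lt : W -> W -> Prop) (w : W) : Prop :=
  ~ exists g : {v : W | lt v w} -> nat,
      forall a b, g a = g b -> a = b.

(* Every set of level w of the hierarchy (put in a normal form [level]) is a section
   [{x | U x y}] of a single universal set [U] on the plane, the code [y] recording the
   countable tree of Pi/Sigma operations; an injection of the ordinals below w into nat
   lets the codes name the levels, and then [U] is Borel. If the hierarchy collapses at
   w, its class contains A and is closed under countable intersections and unions,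
   hence contains every Borel set, in particular the diagonal set [{x | ~ U x x}]:
   Cantor's argument on a code of this set gives a contradiction. *)

From Stdlib Require Import List PeanoNat Cantor Classical ClassicalEpsilon
  FunctionalExtensionality PropExtensionality.
Import ListNotations.

Definition quant (pi : bool) (P : nat -> Prop) : Prop :=
  if pi then forall k, P k else exists k, P k.

Lemma quant_iff pi (P Q : nat -> Prop) :
  (forall k, P k <-> Q k) -> (quant pi P <-> quant pi Q).
Proof. destruct pi; simpl; firstorder. Qed.

Lemma quant_const pi (P : Prop) : quant pi (fun _ => P) <-> P.
Proof.
  destruct pi; simpl; split.
  - intro H; exact (H 0).
  - intros HP _; exact HP.
  - intros [_ HP]; exact HP.
  - intro HP; exists 0; exact HP.
Qed.

Lemma not_quant pi (P : nat -> Prop) :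
  ~ quant pi P <-> quant (negb pi) (fun k => ~ P k).
Proof.
  destruct pi; simpl; split.
  - apply not_all_ex_not.
  - intros [k Hk] H; exact (Hk (H k)).
  - intros H k Hk; exact (H (ex_intro _ k Hk)).
  - intros H [k Hk]; exact (H k Hk).
Qed.

Lemma bset_ext (X Y : bset) : (forall f, X f <-> Y f) -> X = Y.
Proof. intro H; extensionality f; apply propositional_extensionality, H. Qed.

(* Literals are closed under complement, so by [borel_compl] these are the Borel sets. *)
Inductive borel : bset -> Prop :=
| borel_lit l : borel (lit_sem l)
| borel_quant pi (Xs : nat -> bset) :
    (forall k, borel (Xs k)) -> borel (fun f => quant pi (fun k => Xs k f)).

Lemma borel_ext (X Y : bset) : borel X -> (forall f, X f <-> Y f) -> borel Y.
Proof. intros HX E; rewrite <- (bset_ext X Y E); exact HX. Qed.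

Lemma borel_forall (Xs : nat -> bset) :
  (forall k, borel (Xs k)) -> borel (fun f => forall k, Xs k f).
Proof. exact (borel_quant true Xs). Qed.

Lemma borel_exists (Xs : nat -> bset) :
  (forall k, borel (Xs k)) -> borel (fun f => exists k, Xs k f).
Proof. exact (borel_quant false Xs). Qed.

Lemma borel_B i m : borel (fun f => f i = m).
Proof. exact (borel_lit (true, m, i)). Qed.

Lemma borel_preimage (s : nat -> nat) (X : bset) :
  borel X -> borel (fun z => X (fun n => z (s n))).
Proof.
  induction 1 as [[[b m] n] | pi Xs _ IH].
  - apply (borel_ext (lit_sem (b, m, s n))); [apply borel_lit|].
    intro z; destruct b; reflexivity.
  - exact (borel_quant pi _ IH).
Qed.

Lemma borel_compl (X : bset) : borel X -> borel (fun f => ~ X f).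
Proof.
  induction 1 as [[[b m] n] | pi Xs _ IH].
  - apply (borel_ext (lit_sem (negb b, m, n))); [apply borel_lit|].
    intro f; destruct b; simpl; [tauto|].
    split; [intros H H'; exact (H' H) | apply NNPP].
  - apply (borel_ext _ _ (borel_quant (negb pi) _ IH)).
    intro f; symmetry; apply not_quant.
Qed.

Lemma borel_and (X Y : bset) : borel X -> borel Y -> borel (fun f => X f /\ Y f).
Proof.
  intros HX HY.
  assert (HXY : forall k, borel (match k with 0 => X | _ => Y end)) by (intros [|k]; assumption).
  apply (borel_ext _ _ (borel_forall _ HXY)); intro f; split.
  - intro H; exact (conj (H 0) (H 1)).
  - intros [HXf HYf] [|k]; assumption.
Qed.

Lemma borel_or (X Y : bset) : borel X -> borel Y -> borel (fun f => X f \/ Y f).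
Proof.
  intros HX HY.
  assert (HXY : forall k, borel (match k with 0 => X | _ => Y end)) by (intros [|k]; assumption).
  apply (borel_ext _ _ (borel_exists _ HXY)); intro f; split.
  - intros [[|k] H]; [left | right]; exact H.
  - intros [H | H]; [exists 0 | exists 1]; exact H.
Qed.

Lemma borel_empty : borel (fun _ => False).
Proof.
  apply (borel_ext _ _ (borel_and _ _ (borel_lit (true, 0, 0)) (borel_lit (false, 0, 0)))).
  intro f; simpl; tauto.
Qed.

Lemma borel_exists_uniq {A : Type} (P : A -> Prop) (Xs : A -> bset) :
  (forall a a', P a -> P a' -> a = a') -> (forall a, P a -> borel (Xs a)) ->
  borel (fun f => exists a, P a /\ Xs a f).
Proof.
  intros Huniq HXs. destruct (classic (exists a, P a)) as [[a Ha] | Hnone].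
  - apply (borel_ext (Xs a)); [exact (HXs a Ha)|]. intro f; split.
    + intro H; exists a; split; assumption.
    + intros [a' [Ha' H]]. rewrite (Huniq a a' Ha Ha'). exact H.
  - apply (borel_ext _ _ borel_empty). intro f; split; [tauto|].
    intros [a [Ha _]]; apply Hnone; exists a; exact Ha.
Qed.

Lemma inA_lit l : inA (lit_sem l).
Proof.
  exists [[l]]; split; [discriminate|split].
  - intros t [<- | []]; discriminate.
  - intro f; split.
    + intro H; exists [l]; split; [left; reflexivity | intros l' [<- | []]; exact H].
    + intros [t [[<- | []] Ht]]; apply Ht; left; reflexivity.
Qed.

Lemma borel_incl_closed (F : family) :
  (forall X, inA X -> F X) -> (forall X, PiOf F X -> F X) -> (forall X, SigmaOf F X -> F X) ->
  forall X, borel X -> F X.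
Proof.
  intros HA HPi HSigma X HX; induction HX as [l | [|] Xs _ IH].
  - apply HA, inA_lit.
  - apply HPi; exists Xs; split; [exact IH | reflexivity].
  - apply HSigma; exists Xs; split; [exact IH | reflexivity].
Qed.

(* The plane is identified with Baire space through z |-> (evens z, odds z). *)
Definition evens (z : baire) : baire := fun n => z (2 * n).
Definition odds (z : baire) : baire := fun n => z (2 * n + 1).

Definition borel2 (U : baire -> baire -> Prop) : Prop :=
  borel (fun z => U (evens z) (odds z)).

Lemma borel2_not_universal (U : baire -> baire -> Prop) :
  borel2 U -> ~ (forall X, borel X -> exists y, forall x, X x <-> U x y).
Proof.
  intros HU universal.
  assert (Hdiag : borel (fun x => ~ U x x)).
  { apply (borel_ext _ _ (borel_preimage Nat.div2 _ (borel_compl _ HU))). intro x.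
    assert (Hev : evens (fun n => x (Nat.div2 n)) = x).
    { extensionality n; unfold evens; rewrite Nat.div2_even; reflexivity. }
    assert (Hod : odds (fun n => x (Nat.div2 n)) = x).
    { extensionality n; unfold odds; rewrite Nat.div2_odd'; reflexivity. }
    rewrite Hev, Hod; reflexivity. }
  destruct (universal _ Hdiag) as [y Hy].
  specialize (Hy y); tauto.
Qed.

Definition tag (y : baire) (k : nat) : nat := y (to_nat (k, 0)).
Definition subcode (y : baire) (k : nat) : baire := fun j => y (to_nat (k, S j)).

Definition glue (t : nat -> nat) (c : nat -> baire) : baire :=
  fun n => let '(k, j) := of_nat n in match j with 0 => t k | S j' => c k j' end.

Lemma tag_glue t c k : tag (glue t c) k = t k.
Proof. unfold tag, glue; rewrite cancel_of_to; reflexivity. Qed.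

Lemma subcode_glue t c k : subcode (glue t c) k = c k.
Proof. extensionality j; unfold subcode, glue; rewrite cancel_of_to; reflexivity. Qed.

Lemma borel2_subcode (U : baire -> baire -> Prop) k :
  borel2 U -> borel2 (fun x y => U x (subcode y k)).
Proof.
  intro HU.
  set (s := fun m => if Nat.odd m then 2 * to_nat (k, S (Nat.div2 m)) + 1 else m).
  apply (borel_ext _ _ (borel_preimage s _ HU)). intro z.
  assert (Hev : evens (fun n => z (s n)) = evens z).
  { extensionality n; unfold evens, s; rewrite Nat.odd_even; reflexivity. }
  assert (Hod : odds (fun n => z (s n)) = subcode (odds z) k).
  { extensionality n; unfold odds, subcode, s; rewrite Nat.odd_odd, Nat.div2_odd'; reflexivity. }
  rewrite Hev, Hod; reflexivity.
Qed.

Definition encode_lit (l : bool * nat * nat) : nat :=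
  let '(b, m, n) := l in to_nat (to_nat (m, n), Nat.b2n b).

Definition decode_lit (c : nat) : bool * nat * nat :=
  let '(a, b) := of_nat c in let '(m, n) := of_nat a in (Nat.eqb b 1, m, n).

Lemma decode_encode_lit l : decode_lit (encode_lit l) = l.
Proof.
  destruct l as [[b m] n]; unfold decode_lit, encode_lit.
  rewrite !cancel_of_to; destruct b; reflexivity.
Qed.

Definition sigma_pi_lit (X : bset) : Prop :=
  exists c : nat -> nat -> bool * nat * nat,
    forall f, X f <-> exists i, forall j, lit_sem (c i j) f.

(* Position <i, j> of the code holds the j-th literal of the i-th intersection. *)
Definition sigma_pi_univ (x y : baire) : Prop :=
  exists i, forall j, lit_sem (decode_lit (y (to_nat (i, j)))) x.

Lemma sigma_pi_univ_section X : sigma_pi_lit X -> exists y, forall x, X x <-> sigma_pi_univ x y.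
Proof.
  intros [c Hc]. exists (fun n => let '(i, j) := of_nat n in encode_lit (c i j)).
  intro x; rewrite Hc; unfold sigma_pi_univ.
  split; intros [i Hi]; exists i; intro j; specialize (Hi j);
    rewrite cancel_of_to, decode_encode_lit in *; exact Hi.
Qed.

Lemma borel2_sigma_pi_univ : borel2 sigma_pi_univ.
Proof.
  apply borel_exists; intro i; apply borel_forall; intro j.
  apply (borel_ext (fun z => exists c, z (2 * to_nat (i, j) + 1) = c /\
                                       lit_sem (decode_lit c) (evens z))).
  - apply borel_exists; intro c; apply borel_and; [apply borel_B|].
    exact (borel_preimage (fun n => 2 * n) _ (borel_lit _)).
  - intro z; split.
    + intros [c [<- H]]; exact H.
    + intro H; eexists; split; [reflexivity | exact H].
Qed.

Lemma nth_In_hd {A : Type} (l : list A) d i : l <> [] -> In (nth i l (hd d l)) l.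
Proof.
  intro Hl; destruct (Nat.lt_ge_cases i (length l)).
  - apply nth_In; assumption.
  - rewrite nth_overflow by assumption. destruct l; [contradiction | left; reflexivity].
Qed.

Lemma inA_sigma_pi_lit X : inA X -> sigma_pi_lit X.
Proof.
  intros [ts [Hts [Ht HX]]].
  set (term := fun i => nth i ts (hd [] ts)).
  exists (fun i j => nth j (term i) (hd (true, 0, 0) (term i))).
  intro f; rewrite HX; split.
  - intros [t [Hin Hlits]]. destruct (In_nth ts t (hd [] ts) Hin) as [i [_ Hi]].
    exists i; intro j; apply Hlits. unfold term; rewrite Hi.
    apply nth_In_hd, Ht, Hin.
  - intros [i Hi]. exists (term i); split; [apply nth_In_hd, Hts|].
    intros l Hl. destruct (In_nth _ l (hd (true, 0, 0) (term i)) Hl) as [j [_ <-]].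
    apply Hi.
Qed.

Section Hierarchy_codes.

Variables (W : Type) (lt : W -> W -> Prop).
Hypothesis lt_wf : well_founded lt.
Hypothesis lt_trans : forall x y z, lt x y -> lt y z -> lt x z.

Lemma inA_hierarchy b X : inA X -> InPi W lt b X /\ InSigma W lt b X.
Proof.
  intro HX; induction b as [b IH] using (well_founded_ind lt_wf).
  destruct (classic (is_zero W lt b)) as [Hzero | Hnonzero].
  { split; [apply InPi_zero | apply InSigma_zero]; assumption. }
  destruct (classic (exists v, is_pred W lt v b)) as [[v Hpred] | Hnopred].
  - destruct (IH v (proj1 Hpred)) as [HPi HSigma]. split.
    + apply (InPi_succ W lt b v X Hpred). exists (fun _ => X); split; [intro; exact HSigma|].
      intro f; split; [intros H _; exact H | intro H; exact (H 0)].
    + apply (InSigma_succ W lt b v X Hpred). exists (fun _ => X); split; [intro; exact HPi|].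
      intro f; split; [intro H; exists 0; exact H | intros [_ H]; exact H].
  - assert (Hlim : is_limit W lt b).
    { split; [exact Hnonzero | intros v Hv; apply Hnopred; exists v; exact Hv]. }
    destruct (not_all_not_ex _ _ Hnonzero) as [v Hv].
    destruct (IH v Hv) as [HPi HSigma].
    split; [apply (InPi_lim W lt b v) | apply (InSigma_lim W lt b v)]; assumption.
Qed.

(* Normal form of Pi_b (pi = true) and Sigma_b (pi = false); being monotone in b,
   it absorbs the limit stages of the hierarchy. *)
Inductive level : bool -> W -> bset -> Prop :=
| level_quant pi b (Xs : nat -> bset) :
    (forall k, sigma_pi_lit (Xs k) \/ exists v, lt v b /\ level (negb pi) v (Xs k)) ->
    level pi b (fun f => quant pi (fun k => Xs k f)).

Lemma level_ext pi b (X Y : bset) : level pi b X -> (forall f, X f <-> Y f) -> level pi b Y.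
Proof. intros HX E; rewrite <- (bset_ext X Y E); exact HX. Qed.

Lemma sigma_pi_level pi b X : sigma_pi_lit X -> level pi b X.
Proof.
  intro HX. apply (level_ext pi b _ _ (level_quant pi b (fun _ => X) (fun _ => or_introl HX))).
  intro f; apply quant_const.
Qed.

Lemma level_mono pi v b X : lt v b -> level pi v X -> level pi b X.
Proof.
  intros Hvb HX; destruct HX as [pi v Xs HXs]. constructor; intro k.
  destruct (HXs k) as [Hk | [u [Huv Hk]]]; [left; exact Hk|].
  right; exists u; split; [exact (lt_trans _ _ _ Huv Hvb) | exact Hk].
Qed.

Lemma level_of_quant pi v b (Xs : nat -> bset) (X : bset) :
  lt v b -> (forall k, level (negb pi) v (Xs k)) ->
  (forall f, X f <-> quant pi (fun k => Xs k f)) -> level pi b X.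
Proof.
  intros Hvb HXs E. apply (level_ext pi b (fun f => quant pi (fun k => Xs k f))).
  - constructor; intro k; right; exists v; split; [exact Hvb | apply HXs].
  - intro f; symmetry; apply E.
Qed.

Lemma hierarchy_level b :
  (forall X, InPi W lt b X -> level true b X) /\ (forall X, InSigma W lt b X -> level false b X).
Proof.
  induction b as [b IH] using (well_founded_ind lt_wf).
  split; intros X HX;
    inversion HX as [? ? _ HA | ? v ? [Hvb _] [Xs [HXs E]] | ? v ? _ Hvb Hv]; subst.
  - apply sigma_pi_level, inA_sigma_pi_lit, HA.
  - apply (level_of_quant true v b Xs X Hvb); [intro k; apply (proj2 (IH v Hvb)), HXs | exact E].
  - apply (level_mono true v b X Hvb), (proj1 (IH v Hvb)), Hv.
  - apply sigma_pi_level, inA_sigma_pi_lit, HA.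
  - apply (level_of_quant false v b Xs X Hvb); [intro k; apply (proj1 (IH v Hvb)), HXs | exact E].
  - apply (level_mono false v b X Hvb), (proj2 (IH v Hvb)), Hv.
Qed.

Variable w : W.
Variable g : {v | lt v w} -> nat.
Hypothesis g_inj : forall a c, g a = g c -> a = c.

(* Component k of a code y is coded by [subcode y k], and [tag y k] is 0 for a
   [sigma_pi_lit] component and S (g v) for a component of level v. *)
Definition clause (R : W -> baire -> baire -> Prop) (b : W) (x y : baire) (k : nat) : Prop :=
  (tag y k = 0 /\ sigma_pi_univ x (subcode y k)) \/
  (exists a : {v | lt v w},
     lt (proj1_sig a) b /\ tag y k = S (g a) /\ R (proj1_sig a) x (subcode y k)).

Inductive univ : bool -> W -> baire -> baire -> Prop :=
| univ_forall b x y : (forall k, clause (univ false) b x y k) -> univ true b x y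
| univ_exists b x y : (exists k, clause (univ true) b x y k) -> univ false b x y.

Lemma univ_iff pi b x y : univ pi b x y <-> quant pi (clause (univ (negb pi)) b x y).
Proof.
  destruct pi; split;
    solve [intro H; inversion H; assumption | apply univ_forall | apply univ_exists].
Qed.

Lemma clause_tag0 R b x y k :
  tag y k = 0 -> (clause R b x y k <-> sigma_pi_univ x (subcode y k)).
Proof.
  intro Ht; unfold clause; rewrite Ht; split.
  - intros [[_ H] | [a [_ [H _]]]]; [exact H | discriminate H].
  - intro H; left; split; [reflexivity | exact H].
Qed.

Lemma clause_tagS R b x y k a :
  lt (proj1_sig a) b -> tag y k = S (g a) ->
  (clause R b x y k <-> R (proj1_sig a) x (subcode y k)).
Proof.
  intros Hab Ht; unfold clause; rewrite Ht; split.
  - intros [[H _] | [a' [_ [H HR]]]]; [discriminate H|].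
    injection H as H. rewrite (g_inj _ _ H). exact HR.
  - intro H; right; exists a; split; [exact Hab | split; [reflexivity | exact H]].
Qed.

Lemma univ_section pi b X :
  (forall v, lt v b -> lt v w) -> level pi b X -> exists y, forall x, X x <-> univ pi b x y.
Proof.
  revert pi X; induction b as [b IH] using (well_founded_ind lt_wf); intros pi X Hbw HX.
  inversion HX as [pi' b' Xs HXs]; subst.
  assert (Hparts : forall k, exists p : nat * baire,
             forall y, tag y k = fst p -> subcode y k = snd p ->
             forall x, Xs k x <-> clause (univ (negb pi)) b x y k).
  { intro k; destruct (HXs k) as [Hk | [v [Hvb Hk]]].
    - destruct (sigma_pi_univ_section _ Hk) as [c Hc].
      exists (0, c); intros y Ht Hs x; rewrite (clause_tag0 _ _ _ _ _ Ht), Hs; apply Hc.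
    - assert (Hvw : forall u, lt u v -> lt u w)
        by (intros u Huv; exact (Hbw u (lt_trans _ _ _ Huv Hvb))).
      destruct (IH v Hvb (negb pi) (Xs k) Hvw Hk) as [c Hc].
      set (a := exist (fun u => lt u w) v (Hbw v Hvb)).
      exists (S (g a), c); intros y Ht Hs x.
      rewrite (clause_tagS _ _ _ _ _ a Hvb Ht), Hs; apply Hc. }
  destruct (choice _ Hparts) as [p Hp].
  exists (glue (fun k => fst (p k)) (fun k => snd (p k))); intro x.
  rewrite univ_iff; apply quant_iff; intro k.
  apply Hp; [apply tag_glue | apply subcode_glue].
Qed.

Lemma borel2_clause (R : W -> baire -> baire -> Prop) b k :
  (forall v, lt v b -> borel2 (R v)) -> borel2 (fun x y => clause R b x y k).
Proof.
  intro HR; unfold borel2, clause; apply borel_or.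
  - apply borel_and; [exact (borel_B (2 * to_nat (k, 0) + 1) 0)|].
    exact (borel2_subcode _ k borel2_sigma_pi_univ).
  - apply (borel_ext (fun z => exists n, tag (odds z) k = S n /\
      exists a, (lt (proj1_sig a) b /\ g a = n) /\ R (proj1_sig a) (evens z) (subcode (odds z) k))).
    + apply borel_exists; intro n.
      apply borel_and; [exact (borel_B (2 * to_nat (k, 0) + 1) (S n))|].
      apply borel_exists_uniq.
      * intros a a' [_ Ha] [_ Ha']. apply g_inj; congruence.
      * intros a [Hab _]. exact (borel2_subcode _ k (HR _ Hab)).
    + intro z; split.
      * intros [n [Ht [a [[Hab <-] H]]]]. exists a; auto.
      * intros [a [Hab [Ht H]]]. exists (g a); split; [exact Ht|]. exists a; auto.
Qed.

Lemma borel2_univ pi b : borel2 (univ pi b).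
Proof.
  revert pi; induction b as [b IH] using (well_founded_ind lt_wf); intro pi.
  apply (borel_ext (fun z => quant pi (fun k => clause (univ (negb pi)) b (evens z) (odds z) k))).
  - apply borel_quant; intro k. apply borel2_clause; intros v Hv; apply IH, Hv.
  - intro z; symmetry; apply univ_iff.
Qed.

Lemma closed_family_not_below_level pi (F : family) :
  (forall X, inA X -> F X) -> (forall X, PiOf F X -> F X) -> (forall X, SigmaOf F X -> F X) ->
  ~ (forall X, F X -> level pi w X).
Proof.
  intros HA HPi HSigma Hlevel.
  apply (borel2_not_universal (univ pi w) (borel2_univ pi w)).
  intros X HX. apply (univ_section pi w X (fun v Hv => Hv)), Hlevel.
  exact (borel_incl_closed F HA HPi HSigma X HX).
Qed.

End Hierarchy_codes.

Theorem proposition5p28 (W : Type) (lt : W -> W -> Prop) (w : W) :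
  well_order W lt ->
  ((fam_eq (PiOf (InPi W lt w)) (InPi W lt w) /\
    fam_eq (InPi W lt w) (SigmaOf (InPi W lt w)))
   \/
   (fam_eq (PiOf (InSigma W lt w)) (InSigma W lt w) /\
    fam_eq (InSigma W lt w) (SigmaOf (InSigma W lt w)))) ->
  uncountable_below W lt w.
Proof.
  intros [lt_wf [lt_trans _]] collapse [g g_inj].
  destruct collapse as [[HPi HSigma] | [HPi HSigma]].
  - apply (closed_family_not_below_level W lt lt_wf lt_trans w g g_inj true (InPi W lt w)).
    + intros X HX; apply (inA_hierarchy W lt lt_wf w X HX).
    + intro X; apply HPi.
    + intro X; apply HSigma.
    + intro X; apply (hierarchy_level W lt lt_wf lt_trans w).
  - apply (closed_family_not_below_level W lt lt_wf lt_trans w g g_inj false (InSigma W lt w)).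
    + intros X HX; apply (inA_hierarchy W lt lt_wf w X HX).
    + intro X; apply HPi.
    + intro X; apply HSigma.
    + intro X; apply (hierarchy_level W lt lt_wf lt_trans w).
Qed.
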